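(* Let $\lambda>0$, let $K(\sigma,\tau)=\exp(-\lambda d(\sigma,\tau))$ on $S_n$ with RKHS $\mathcal H$ and feature map $\phi:S_n\to\mathcal H$ (so $\langle\phi(\sigma),\phi(\tau)\rangle_{\mathcal H}=K(\sigma,\tau)$). Let $R\subseteq S_n$ be a top-$k$ partial ranking, $p$ the uniform distribution on $R$, and $\mu_p=\frac1{|R|}\sum_{\sigma\in R}\phi(\sigma)$. Then for every $\sigma_1\in R$, the function $$\sigma_2\mapsto\Big\|\mu_p-\tfrac12\big(\phi(\sigma_1)+\phi(\sigma_2)\big)\Big\|_{\mathcal H}^2,\qquad\sigma_2\in R,$$ has a unique minimiser over $R$, namely $\sigma_2=A_R(\sigma_1)$. That is, the second step of kernel herding for $p$ started from any $\sigma_1\in R$ produces exactly the antithetic sample of $\sigma_1$.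
   Context: $S_n$ is the symmetric group on $[n]$; $\sigma\in S_n$ is identified with the full ranking $\sigma(1)\succ\cdots\succ\sigma(n)$. For distinct items $x,y$, $\{x,y\}$ is discordant for $\sigma,\tau$ if $(\sigma^{-1}(x)-\sigma^{-1}(y))(\tau^{-1}(x)-\tau^{-1}(y))<0$. The Kendall distance $d(\sigma,\tau)$ is the number of unordered discordant pairs; $K$ is a positive definite kernel. For $0\le k\le n$ and distinct $a_1,\dots,a_k\in[n]$, the top-$k$ partial ranking is the set $R=\{\sigma\in S_n:\sigma(i)=a_i,\ i\le k\}$. The antithetic operator $A_R:R\to R$ is $A_R(\sigma)(i)=a_i$ for $i\le k$ and $A_R(\sigma)(k+j)=\sigma(n+1-j)$ for $j=1,\dots,n-k$. *)

From mathcomp Require Import all_boot all_order all_fingroup.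
From Stdlib Require Import Reals.
Set Implicit Arguments. Unset Strict Implicit. Unset Printing Implicit Defensive.

(* Rankings: sigma : {perm 'I_n}; position i (0-indexed) holds item sigma i.
   sigma^-1 x is the position of item x. *)

Definition discordant n (s t : {perm 'I_n}) (x y : 'I_n) : bool :=
  ((s^-1)%g x < (s^-1)%g y) && ((t^-1)%g y < (t^-1)%g x)
  || ((s^-1)%g y < (s^-1)%g x) && ((t^-1)%g x < (t^-1)%g y).

Definition kendall n (s t : {perm 'I_n}) : nat :=
  #|[set p : 'I_n * 'I_n | (p.1 < p.2) && discordant s t p.1 p.2]|.

Definition mallowsK (lam : R) n (s t : {perm 'I_n}) : R :=
  exp (- lam * INR (kendall s t)).

(* Squared RKHS norm of the finite combination sum_s c(s) phi(s):
   ||sum_s c s phi s||^2 = sum_{s,t} c s c t K(s,t). *)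
Definition rkhs_norm2 n (K : {perm 'I_n} -> {perm 'I_n} -> R)
  (c : {perm 'I_n} -> R) : R :=
  \big[Rplus/0%R]_(s : {perm 'I_n}) \big[Rplus/0%R]_(t : {perm 'I_n})
     (c s * c t * K s t)%R.

(* Top-k partial ranking given by the sequence a = [a_1;...;a_k] (k = size a):
   R = {sigma | sigma(i) = a_i for i <= k} (0-indexed: positions i < size a). *)
Definition topk n (a : seq 'I_n) : {set {perm 'I_n}} :=
  [set s : {perm 'I_n} | [forall i : 'I_n, (i < size a) ==> (s i == nth i a i)]].

(* Antithetic operator A_R, as a function on positions (0-indexed):
   A(s)(p) = a_p if p < k, and s(n-1+k-p) otherwise
   (this is A(s)(k+j) = s(n+1-j) in 1-indexed notation). *)
Definition antithetic n (a : seq 'I_n) (s : {perm 'I_n}) (p : 'I_n) : 'I_n :=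
  if p < size a then nth p a p else s (insubd p (n.-1 + size a - p)).

(* Coefficients of mu_p - 1/2 (phi s1 + phi s2), p uniform on A *)
Definition herd_coef n (A : {set {perm 'I_n}}) (s1 s2 : {perm 'I_n})
  (s : {perm 'I_n}) : R :=
  ((if s \in A then / INR #|A| else 0)
   - / 2 * (if s == s1 then 1 else 0) - / 2 * (if s == s2 then 1 else 0))%R.

Definition herding2 (lam : R) n (A : {set {perm 'I_n}}) (s1 s2 : {perm 'I_n}) : R :=
  rkhs_norm2 (@mallowsK lam n) (herd_coef A s1 s2).

From mathcomp Require Import all_boot all_order all_fingroup all_algebra.
From Stdlib Require Import Reals.
From mathcomp Require Import Rstruct ring lra zify.
Set Implicit Arguments. Unset Strict Implicit. Unset Printing Implicit Defensive.
Import Order.TTheory GRing.Theory Num.Theory.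

(* Expanding the square, the herding objective is a constant plus K(s1, s2)/2,
   provided the kernel mean [sum_(s in R) K(s, s2)] does not depend on s2 in R.
   It does not: relabelling the items by s1^-1 s2 fixes the top items, so it
   maps R onto itself, sends s1 to s2 and preserves the Kendall distance.
   Since K decreases with d, the minimisers are the s2 in R farthest from s1.
   For s, t in R, every pair discordant for s and t lies among the items that
   s ranks below position k, and A_R(s), which reverses these positions, makes
   all such pairs discordant; as a ranking is determined by its discordance
   relation to s, A_R(s) is the unique farthest point. *)

Section Kendall.
Variable n : nat.
Local Open Scope group_scope.
Implicit Types (s t u g h : {perm 'I_n}) (x y i j : 'I_n).

Lemma discordantC s t x y : discordant s t x y = discordant s t y x.
Proof. by rewrite /discordant orbC. Qed.

Lemma discordant_sym s t x y : discordant s t x y = discordant t s x y.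
Proof. by rewrite /discordant [X in X || _]andbC [X in _ || X]andbC orbC. Qed.

Lemma discordant_xx s t x : discordant s t x x = false.
Proof. by rewrite /discordant ltnn. Qed.

Lemma discordantMr s t g x y :
  discordant (s * g) (t * g) x y = discordant s t (g^-1 x) (g^-1 y).
Proof. by rewrite /discordant !invMg !permM. Qed.

Definition discordant_pairs s t :=
  [set p : 'I_n * 'I_n | (p.1 < p.2) && discordant s t p.1 p.2].

Lemma kendall_sym s t : kendall s t = kendall t s.
Proof. by apply: eq_card => p; rewrite !inE discordant_sym. Qed.

Lemma kendall_xx s : kendall s s = 0.
Proof.
apply/eqP; rewrite cards_eq0; apply/eqP/setP => p.
by rewrite !inE /discordant; apply/negbTE; lia.
Qed.

Lemma card_discordant s t :
  #|[set p : 'I_n * 'I_n | discordant s t p.1 p.2]| = (kendall s t).*2.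
Proof.
pose D := discordant_pairs s t.
pose swap (p : 'I_n * 'I_n) := (p.2, p.1).
have swap_inj : injective swap by move=> [? ?] [? ?] [-> ->].
have -> : [set p | discordant s t p.1 p.2] = D :|: swap @^-1: D.
  apply/setP => [[x y]]; rewrite !inE /=.
  case: (ltngtP x y) => [_|_|/val_inj <-]; rewrite ?discordant_xx ?orbF //.
  by rewrite discordantC.
rewrite cardsU card_preimset // -addnn.
suff -> : D :&: swap @^-1: D = set0 by rewrite cards0 subn0.
by apply/setP => [[x y]]; rewrite !inE /=; apply/negbTE; lia.
Qed.

Lemma kendallMr s t g : kendall (s * g) (t * g) = kendall s t.
Proof.
apply: double_inj; rewrite -!card_discordant.
pose relabel (p : 'I_n * 'I_n) := (g p.1, g p.2).
have relabel_inj : injective relabel.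
  by move=> [? ?] [? ?] [/perm_inj -> /perm_inj ->].
rewrite -(card_preimset _ relabel_inj); apply: eq_card => p.
by rewrite !inE discordantMr /= !permK.
Qed.

Lemma perm_ltn_mono_id h : {mono h : i j / i < j} -> h = 1.
Proof.
have le_incr g : {mono g : i j / i < j} -> forall i, i <= g i.
  move=> g_mono; suff le_m m i : i = m :> nat -> m <= g i by move=> i; apply: le_m.
  elim: m i => [//|m IHm] i vi.
  have lt_mn : m < n by have := ltn_ord i; lia.
  have := IHm (Ordinal lt_mn) erefl; have := g_mono (Ordinal lt_mn) i.
  rewrite vi /= leqnn; lia.
move=> h_mono; have hV_mono : {mono h^-1 : i j / i < j}.
  by move=> i j; rewrite -[in RHS](permKV h i) -[in RHS](permKV h j) h_mono.
apply/permP => i; apply/val_inj/eqP; rewrite perm1 eqn_leq le_incr // andbT.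
by have := le_incr _ hV_mono (h i); rewrite permK.
Qed.

Lemma discordant_inj s t u :
  (forall x y, discordant s t x y = discordant s u x y) -> t = u.
Proof.
(* [t * u^-1] sends the position of an item in [t] to its position in [u]. *)
move=> Dtu; suff tu1 : t * u^-1 = 1 by rewrite -(mulgKV u t) tu1 mul1g.
apply: perm_ltn_mono_id => i j; rewrite !permM.
have := Dtu (t i) (t j); rewrite /discordant !permK.
have [->|neq_ij] := eqVneq i j; first by rewrite !ltnn.
have neq_s : s^-1 (t i) != s^-1 (t j) by rewrite !(inj_eq perm_inj).
have neq_u : u^-1 (t i) != u^-1 (t j) by rewrite !(inj_eq perm_inj).
move: neq_ij neq_s neq_u; rewrite -!val_eqE /=; lia.
Qed.

Lemma sub_discordant_pairs s t u :
  (forall x y, discordant s t x y -> discordant s u x y) ->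
  discordant_pairs s t \subset discordant_pairs s u.
Proof. by move=> Dtu; apply/subsetP => p; rewrite !inE => /andP[-> /Dtu]. Qed.

Lemma leq_kendall s t u :
  (forall x y, discordant s t x y -> discordant s u x y) ->
  kendall s t <= kendall s u.
Proof. by move/sub_discordant_pairs/subset_leq_card. Qed.

Lemma kendall_eq_sub s t u :
  (forall x y, discordant s t x y -> discordant s u x y) ->
  kendall s u <= kendall s t -> t = u.
Proof.
move=> Dtu le_ut; apply: (discordant_inj (s := s)) => x y.
wlog lt_xy : x y / x < y.
  move=> lt_case; case: (ltngtP x y) => [/lt_case //|/lt_case|/val_inj ->].
    by rewrite discordantC [RHS]discordantC.
  by rewrite !discordant_xx.
have /eqP/setP/(_ (x, y)) : discordant_pairs s t == discordant_pairs s u.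
  by rewrite eqEcard sub_discordant_pairs.
by rewrite /discordant_pairs !inE /= lt_xy.
Qed.

End Kendall.

Section TopK.
Variables (n : nat) (a : seq 'I_n).
Local Open Scope group_scope.
Local Notation k := (size a).
Local Notation A := (topk a).
Implicit Types (s t g : {perm 'I_n}) (x y p : 'I_n).

Lemma topkP s : reflect (forall i : 'I_n, i < k -> s i = nth i a i) (s \in A).
Proof.
rewrite inE; apply: (iffP forallP) => [sa i /(implyP (sa i))/eqP //|sa i].
by apply/implyP => /sa ->.
Qed.

Lemma topk_invE s t x : s \in A -> t \in A -> s^-1 x < k -> t^-1 x = s^-1 x.
Proof.
move=> /topkP sa /topkP ta top_x; apply: (canLR (permK t)).
by rewrite ta // -sa // permKV.
Qed.

Lemma topk_discordant_bottom s t x y :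
  s \in A -> t \in A -> discordant s t x y -> k <= s^-1 x.
Proof.
move=> sA tA; rewrite leqNgt; apply: contraTN => top_x.
rewrite /discordant (topk_invE sA tA top_x).
have [top_y|bot_y] := ltnP (s^-1 y) k; first by rewrite (topk_invE sA tA top_y); lia.
have : k <= t^-1 y.
  rewrite leqNgt; apply/negP => top_ty.
  by move: bot_y; rewrite (topk_invE tA sA top_ty) leqNgt top_ty.
lia.
Qed.

Lemma topkMr s g : (forall i : 'I_n, i < k -> g (nth i a i) = nth i a i) ->
  (s * g \in A) = (s \in A).
Proof.
have topkM (h t : {perm 'I_n}) : (forall i : 'I_n, i < k -> h (nth i a i) = nth i a i) ->
    t \in A -> t * h \in A.
  by move=> fix_h /topkP ta; apply/topkP => i top_i; rewrite permM ta // fix_h.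
move=> fix_g; apply/idP/idP; last exact: topkM.
have fix_gV (i : 'I_n) : i < k -> g^-1 (nth i a i) = nth i a i.
  by move=> top_i; rewrite -{1}(fix_g i top_i) permK.
by move/(topkM _ _ fix_gV); rewrite mulgK.
Qed.

Definition rev_bottom p : 'I_n := if p < k then p else insubd p (n.-1 + k - p).

Lemma rev_bottomE p : rev_bottom p = (if p < k then p : nat else n.-1 + k - p) :> nat.
Proof.
rewrite /rev_bottom; case: ifP => // bot_p; rewrite val_insubd.
by have := ltn_ord p; case: ifP => //; lia.
Qed.

Lemma rev_bottomK : involutive rev_bottom.
Proof.
move=> p; apply: val_inj => /=; rewrite !rev_bottomE; have := ltn_ord p.
by case: (ltnP p k) => [-> //|bot_p]; case: ifP; lia.
Qed.

Definition antithetic_perm s := perm (inv_inj rev_bottomK) * s.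

Lemma antithetic_permE s p : antithetic_perm s p = s (rev_bottom p).
Proof. by rewrite permM permE. Qed.

Lemma antithetic_permVE s x : (antithetic_perm s)^-1 x = rev_bottom (s^-1 x).
Proof. by apply: (canLR (permK _)); rewrite antithetic_permE rev_bottomK permKV. Qed.

Lemma antithetic_perm_topk s : s \in A -> antithetic_perm s \in A.
Proof.
move=> /topkP sa; apply/topkP => i top_i.
by rewrite antithetic_permE /rev_bottom top_i sa.
Qed.

Lemma antithetic_permP s : s \in A -> antithetic_perm s =1 antithetic a s.
Proof.
move=> /topkP sa p; rewrite antithetic_permE /rev_bottom /antithetic.
by case: ifP => // /sa.
Qed.

Lemma discordant_antithetic_perm s x y :
  x != y -> k <= s^-1 x -> k <= s^-1 y -> discordant s (antithetic_perm s) x y.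
Proof.
move=> neq_xy bot_x bot_y.
have : s^-1 x != s^-1 y :> nat by rewrite val_eqE (inj_eq perm_inj).
rewrite /discordant !antithetic_permVE !rev_bottomE !ltnNge bot_x bot_y /=.
move: (ltn_ord (s^-1 x)) (ltn_ord (s^-1 y)); lia.
Qed.

Lemma topk_discordant_antithetic s t : s \in A -> t \in A ->
  forall x y, discordant s t x y -> discordant s (antithetic_perm s) x y.
Proof.
move=> sA tA x y Dxy; apply: discordant_antithetic_perm.
- by apply: contraTneq Dxy => ->; rewrite discordant_xx.
- exact: topk_discordant_bottom Dxy.
- by rewrite discordantC in Dxy; exact: topk_discordant_bottom Dxy.
Qed.

End TopK.

Section Herding.
Local Open Scope ring_scope.
Variable n : nat.
Implicit Types (A : {set {perm 'I_n}}) (s t : {perm 'I_n}).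

Lemma herd_coefE A s1 s2 t : herd_coef A s1 s2 t =
  (t \in A)%:R * #|A|%:R^-1 - ((t == s1)%:R + (t == s2)%:R) / 2.
Proof.
by rewrite /herd_coef !RealsE; case: (t \in A); case: (t == s1); case: (t == s2);
  rewrite /=; ring.
Qed.

Lemma sum_herd_coef A s1 s2 (F : {perm 'I_n} -> R) :
  \sum_t herd_coef A s1 s2 t * F t =
  #|A|%:R^-1 * \sum_(t in A) F t - (F s1 + F s2) / 2.
Proof.
have sum_delta u : \sum_t (t == u)%:R * F t = F u.
  rewrite (bigD1 u) //= eqxx mul1r big1 ?addr0 // => t /negbTE ->.
  by rewrite mul0r.
have sum_indicator : \sum_t (t \in A)%:R * F t = \sum_(t in A) F t.
  by rewrite [RHS]big_mkcond; apply: eq_bigr => t _; case: (t \in A); rewrite ?mul1r ?mul0r.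
transitivity (\sum_t (#|A|%:R^-1 * ((t \in A)%:R * F t)
    - 2^-1 * ((t == s1)%:R * F t) - 2^-1 * ((t == s2)%:R * F t))).
  by apply: eq_bigr => t _; rewrite herd_coefE; ring.
by rewrite !sumrB -!mulr_sumr sum_indicator !sum_delta; ring.
Qed.

Lemma rkhs_norm2_herd_coef (K : {perm 'I_n} -> {perm 'I_n} -> R) A s1 s2 :
  (forall s t, K s t = K t s) -> (forall s, K s s = 1) ->
  rkhs_norm2 K (herd_coef A s1 s2) =
  #|A|%:R^-1 ^+ 2 * \sum_(s in A) \sum_(t in A) K s t
  - #|A|%:R^-1 * (\sum_(s in A) K s s1 + \sum_(s in A) K s s2)
  + (1 + K s1 s2) / 2.
Proof.
move=> K_sym K_diag.
have -> : rkhs_norm2 K (herd_coef A s1 s2) =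
    \sum_s herd_coef A s1 s2 s * \sum_t herd_coef A s1 s2 t * K s t.
  by apply: eq_bigr => s _; rewrite mulr_sumr; apply: eq_bigr => t _; rewrite mulrA.
under eq_bigr do rewrite sum_herd_coef.
rewrite sum_herd_coef sumrB -mulr_sumr -mulr_suml big_split /= !K_diag.
have sumC u : \sum_(t in A) K u t = \sum_(s in A) K s u.
  by apply: eq_bigr => t _; rewrite K_sym.
by rewrite !sumC (K_sym s2 s1); set w := #|A|%:R^-1; field.
Qed.

Variable lam : R.

Lemma mallowsK_sym s t : mallowsK lam s t = mallowsK lam t s.
Proof. by rewrite /mallowsK kendall_sym. Qed.

Lemma mallowsK_xx s : mallowsK lam s s = 1.
Proof. by rewrite /mallowsK kendall_xx /= Rmult_0_r exp_0. Qed.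

Lemma mallowsK_le s t u : (0 < lam)%R ->
  (mallowsK lam s t <= mallowsK lam s u) = (kendall s u <= kendall s t)%nat.
Proof.
move=> lam_gt0; apply: (le_nmono (f := fun m => exp (- lam * INR m))) => m m' lt_mm'.
apply/RltP/exp_increasing/Rmult_lt_gt_compat_neg_l; first exact: Ropp_lt_gt_0_contravar.
by apply: lt_INR; apply/ssrnat.ltP.
Qed.

Lemma sum_mallowsK_topk (a : seq 'I_n) s1 t : s1 \in topk a -> t \in topk a ->
  \sum_(s in topk a) mallowsK lam s t = \sum_(s in topk a) mallowsK lam s s1.
Proof.
move=> /topkP s1a /topkP ta; set g := (s1^-1 * t)%g.
have fix_g (i : 'I_n) : (i < size a)%nat -> g (nth i a i) = nth i a i.
  by move=> top_i; rewrite permM -{1}(s1a i top_i) permK ta.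
rewrite (reindex_inj (mulIg g)); apply: eq_big => [s|s _]; first exact: topkMr.
by rewrite -[t](mulKVg s1) -/g /mallowsK kendallMr.
Qed.

Lemma herding2_topk_le (a : seq 'I_n) s1 s2 t :
  s1 \in topk a -> s2 \in topk a -> t \in topk a ->
  (herding2 lam (topk a) s1 s2 <= herding2 lam (topk a) s1 t) =
  (mallowsK lam s1 s2 <= mallowsK lam s1 t).
Proof.
move=> s1A s2A tA.
rewrite /herding2 !(rkhs_norm2_herd_coef _ _ _ mallowsK_sym mallowsK_xx).
rewrite (sum_mallowsK_topk s1A s2A) (sum_mallowsK_topk s1A tA).
by apply/idP/idP => ?; lra.
Qed.

End Herding.

Theorem theorem6 (lam : R) (n : nat) (a : seq 'I_n) :
  (0 < lam)%R -> uniq a ->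
  forall s1 : {perm 'I_n}, s1 \in topk a ->
  (exists2 s2 : {perm 'I_n}, s2 \in topk a & forall p, s2 p = antithetic a s1 p) /\
  (forall s2 : {perm 'I_n}, s2 \in topk a ->
     ((forall t : {perm 'I_n}, t \in topk a ->
         (herding2 lam (topk a) s1 s2 <= herding2 lam (topk a) s1 t)%R)
      <-> (forall p, s2 p = antithetic a s1 p))).
Proof.
move=> lam_gt0 _ s1 s1A; have antiA := antithetic_perm_topk s1A.
split; first by exists (antithetic_perm a s1); last exact: antithetic_permP.
move=> s2 s2A.
have herding2_le t : t \in topk a ->
    (herding2 lam (topk a) s1 s2 <= herding2 lam (topk a) s1 t)%R <->
    (kendall s1 t <= kendall s1 s2)%nat.
  by move=> tA; rewrite (rwP RleP) herding2_topk_le // mallowsK_le.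
have s2_antiP : (forall p, s2 p = antithetic a s1 p) <-> s2 = antithetic_perm a s1.
  split=> [s2E|-> p]; last exact: antithetic_permP.
  by apply/permP => p; rewrite s2E antithetic_permP.
split=> [s2_min | /s2_antiP s2E t tA].
  apply/s2_antiP; apply: (kendall_eq_sub (topk_discordant_antithetic s1A s2A)).
  exact/herding2_le/s2_min.
apply/herding2_le => //; rewrite s2E.
exact/leq_kendall/(topk_discordant_antithetic s1A tA).
Qed.
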